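(* Let $H$ be a graph, let $\kappa=1+1/v(H)$, and let $0<\delta<1/4$ satisfy $1-2\delta>\delta^{1-1/\kappa}$. For every $0<c<1/2$, $\beta>0$ and positive integer $d$ there are $C,\varepsilon>0$ such that the following holds. Let $\Gamma$ be a $(c,t)$-sparse graph with $n$ vertices and let $G\subseteq\Gamma$ be a $\delta$-reduced bipartite subgraph of $\Gamma$ with parts $U,R$, $|U|=m$, $|R|=r$, and at least $C r m^{1-1/d}t^{1/d}$ edges. Then, with probability at least $1/2$ over a uniformly chosen $u\in U$, the set $\{u\}$ is $(\beta,\varepsilon,k)$-good for all $k\le d$.
   Context: A graph $\Gamma$ is $(c,t)$-sparse if for every pair of (not necessarily disjoint) vertex subsets $A,B\subseteq V(\Gamma)$ with $|A|,|B|\ge t$ we have $e(A,B)\le (1-c)|A||B|$, where $e(A,B)$ counts ordered pairs $(a,b)\in A\times B$ with $\{a,b\}\in E(\Gamma)$. For a set $S$ of vertices, $d_{\mathrm{avg}}(S)$ is its average degree; a bipartite graph with parts $U,R$ is $\delta$-reduced if every $u\in U$ has degree in $[\delta d_{\mathrm{avg}}(U),\delta^{-1}d_{\mathrm{avg}}(U)]$. $N_G(S)=\bigcap_{v\in S}N_G(v)$ is the common neighborhood and $N^+_\Gamma(S)=\bigcup_{v\in S}N_\Gamma(v)$. Let $q=e(G)/(mr)$. For $T\subseteq U$ and $\varepsilon>0$, a $k$-tuple $S$ of vertices of $R$ is $(\varepsilon,T)$-rich if $|N_G(S)\setminus N^+_\Gamma(T)|\ge \varepsilon m q^{k}$. For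 $1\le k\le d$, $T$ is $(\beta,\varepsilon,k)$-good if the number of $k$-tuples of vertices of $N_G(T)$ (entries not required to be distinct) that are not $(\varepsilon,T)$-rich is at most $\beta|N_G(T)|^k$. *)

From HB Require Import structures.
From mathcomp Require Import all_boot all_order all_algebra.
From mathcomp Require Import reals exp.
Set Implicit Arguments. Unset Strict Implicit. Unset Printing Implicit Defensive.
Import Order.TTheory GRing.Theory Num.Theory.
Local Open Scope ring_scope.

Section Defs.
Variables (R : realType) (V : finType).

Definition simple_graph (E : rel V) : Prop :=
  (forall x y, E x y = E y x) /\ (forall x, ~~ E x x).

Definition e_pairs (E : rel V) (A B : {set V}) : nat :=
  #|[set p : V * V | (p.1 \in A) && (p.2 \in B) && E p.1 p.2]|.

Definition sparse (E : rel V) (c t : R) : Prop :=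
  forall A B : {set V}, t <= #|A|%:R -> t <= #|B|%:R ->
    (e_pairs E A B)%:R <= (1 - c) * #|A|%:R * #|B|%:R.

Definition bipartite_subgraph (Gam G : rel V) (U Rp : {set V}) : Prop :=
  simple_graph G /\ [disjoint U & Rp] /\
  (forall x y, G x y -> Gam x y) /\
  (forall x y, G x y -> ((x \in U) && (y \in Rp)) || ((x \in Rp) && (y \in U))).

Definition bip_edges (G : rel V) (U Rp : {set V}) : nat :=
  e_pairs G U Rp.

Definition degree (G : rel V) (v : V) : nat := #|[set y | G v y]|.

Definition d_avg (G : rel V) (U Rp : {set V}) : R :=
  (bip_edges G U Rp)%:R / #|U|%:R.

Definition reduced (delta : R) (G : rel V) (U Rp : {set V}) : Prop :=
  forall u, u \in U ->
    delta * d_avg G U Rp <= (degree G u)%:R <= delta^-1 * d_avg G U Rp.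

Definition NG (G : rel V) (S : {set V}) : {set V} :=
  [set y | [forall x in S, G x y]].

Definition NplusG (Gam : rel V) (T : {set V}) : {set V} :=
  [set y | [exists x in T, Gam x y]].

Definition qdens (G : rel V) (U Rp : {set V}) : R :=
  (bip_edges G U Rp)%:R / (#|U|%:R * #|Rp|%:R).

Definition rich (Gam G : rel V) (U Rp : {set V}) (eps : R) (T : {set V})
    (k : nat) (S : {ffun 'I_k -> V}) : bool :=
  eps * #|U|%:R * (qdens G U Rp) ^+ k <=
    #|NG G [set S i | i : 'I_k] :\: NplusG Gam T|%:R.

Definition good (Gam G : rel V) (U Rp : {set V}) (beta eps : R) (k : nat)
    (T : {set V}) : bool :=
  (#|[set S : {ffun 'I_k -> V} | [forall i, S i \in NG G T] &&
        ~~ rich Gam G U Rp eps T S]|)%:R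
    <= beta * (#|NG G T|%:R) ^+ k.

End Defs.

(* Call a k-tuple S of R bad for u if it lies in N_G(u) but is not
   (eps, {u})-rich.  For a fixed S, the vertices u for which S is bad lie in
   W = N_G(S) and each misses at most eps m q^k vertices of W, so by
   (c, t)-sparseness there are at most max(t, eps m q^k / c) of them.  Summing
   over the at most r^k tuples, the number of bad pairs (u, S) is at most
   r^k eps m q^k / c, whereas by delta-reducedness a vertex u that is not
   (beta, eps, k)-good carries more than beta deg(u)^k >= beta (delta q r)^k bad
   tuples.  So at most eps m / (c beta delta^k) vertices fail for a given k.
   The edge-count hypothesis with C = (eps / c)^(-1/d) says exactly that
   t <= (eps / c) m q^d, which makes the maximum above equal to its second term,
   and eps = c beta delta^d / (2 d) makes each of the d failure sets have at most
   m / (2 d) elements. *)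

From HB Require Import structures.
From mathcomp Require Import all_boot all_order all_algebra.
From mathcomp Require Import reals exp.
From mathcomp Require Import lra.
Import Order.TTheory GRing.Theory Num.Theory.
Set Implicit Arguments. Unset Strict Implicit.
Local Open Scope ring_scope.

Section Neighbourhoods.
Variables (V : finType) (E : rel V).

Lemma e_pairsE (A B : {set V}) :
  e_pairs E A B = (\sum_(x in A) #|[set y in B | E x y]|)%N.
Proof.
rewrite /e_pairs -sum1_card.
rewrite (eq_bigr (fun x => \sum_(y | (y \in B) && E x y) 1)%N); last first.
  by move=> x _; rewrite -sum1_card; apply: eq_bigl => y; rewrite inE.
rewrite pair_big_dep /=; apply: eq_bigl => -[x y].
by rewrite !inE andbA.
Qed.

Lemma NG_set1 x : NG E [set x] = [set y | E x y].
Proof.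
apply/setP => y; rewrite !inE.
by apply/forall_inP/idP => [/(_ x (set11 x)) | Exy z /set1P ->].
Qed.

Lemma NplusG_set1 x : NplusG E [set x] = [set y | E x y].
Proof.
apply/setP => y; rewrite !inE.
by apply/exists_inP/idP => [[z /set1P ->] | Exy]; last exists x; rewrite ?set11.
Qed.

Lemma cardsID_NplusG_set1 (W : {set V}) x :
  (#|[set y in W | E x y]| + #|W :\: NplusG E [set x]|)%N = #|W|.
Proof.
rewrite -(cardsID (NplusG E [set x]) W) NplusG_set1; congr (_ + _)%N.
by apply: eq_card => y; rewrite !inE.
Qed.

End Neighbourhoods.

Section SparseGraph.
Variables (R : realType) (V : finType) (Gam : rel V) (c t : R).
Hypotheses (Gam_sparse : sparse Gam c t) (c_gt0 : 0 < c).

(* When [|X|, |W| >= t], the bound [e(X, W) >= |X| (|W| - th)] and sparseness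
   force [c |W| <= th]. *)
Lemma sparse_card_almost_complete (X W : {set V}) (th : R) :
  0 <= th -> X \subset W ->
  (forall x, x \in X -> #|W :\: NplusG Gam [set x]|%:R <= th) ->
  #|X|%:R <= Num.max t (th / c).
Proof.
move=> th_ge0 sXW X_almost.
have leXW : #|X|%:R <= #|W|%:R :> R by rewrite ler_nat subset_leq_card.
rewrite le_max; have [ltXt|geXt] := ltP (#|X|%:R : R) t; first by rewrite ltW.
have [ltWt|geWt] := ltP (#|W|%:R : R) t.
  by rewrite (ltW (le_lt_trans leXW ltWt)).
apply/orP; right; rewrite ler_pdivlMr //.
have [X0|X_gt0] := posnP #|X|; first by rewrite X0 mul0r.
have e_lower : #|X|%:R * (#|W|%:R - th) <= (e_pairs Gam X W)%:R :> R.
  rewrite e_pairsE natr_sum mulr_natl -sumr_const; apply: ler_sum => x xX.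
  rewrite -(cardsID_NplusG_set1 Gam W x) natrD.
  by have := X_almost x xX; lra.
have c_bound : #|X|%:R * (c * #|W|%:R - th) <= 0 :> R.
  by have := Gam_sparse geXt geWt; lra.
have X_pos : 0 < #|X|%:R :> R by rewrite ltr0n.
have cW_le : c * #|W|%:R <= th by rewrite -subr_le0 -(pmulr_rle0 _ X_pos).
by rewrite mulrC (le_trans _ cW_le) // ler_pM2l.
Qed.
End SparseGraph.

Lemma powR_invn_expn (R : realType) (x : R) d :
  (0 < d)%N -> 0 <= x -> powR x d%:R^-1 ^+ d = x.
Proof.
move=> d_gt0 x_ge0.
by rewrite -powR_mulrn ?powR_ge0 // -powRrM mulVf ?powRr1 // pnatr_eq0 -lt0n.
Qed.

Lemma expn_le_of_powR_le (R : realType) (C x y z : R) d :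
  (0 < d)%N -> 0 <= C -> 0 <= x -> 0 < y ->
  C * powR y (1 - d%:R^-1) * powR x d%:R^-1 <= z * y -> C ^+ d * x <= z ^+ d * y.
Proof.
move=> d_gt0 C_ge0 x_ge0 y_gt0.
have y_split : y = powR y (1 - d%:R^-1) * powR y d%:R^-1.
  by rewrite -powRD ?subrK ?powRr1 ?ltW // implybE oner_eq0.
rewrite [in z * y]y_split mulrA mulrAC (mulrAC z) ler_pM2r ?powR_gt0 // => le_root.
have root_ge0 : 0 <= C * powR x d%:R^-1 by rewrite mulr_ge0 ?powR_ge0.
have := @lerXn2r R d (C * powR x d%:R^-1) (z * powR y d%:R^-1).
rewrite !nnegrE !exprMn !powR_invn_expn ?(ltW y_gt0) //; apply => //.
exact: le_trans le_root.
Qed.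

Section UnionBound.
Variable V : finType.

Lemma card_bigcup_le n (B : 'I_n -> {set V}) :
  (#|\bigcup_(i < n) B i| <= \sum_(i < n) #|B i|)%N.
Proof.
elim/big_ind2: _ => [|a X b Y leXa leYb|//]; first by rewrite cards0.
by rewrite (leq_trans (leq_card_setU X Y)) ?leq_add.
Qed.

Lemma card_forall_ge (U : {set V}) (P : nat -> pred V) d :
  (#|U| <= #|[set u in U | [forall k : 'I_d.+1, (0 < k)%N ==> P k u]]|
           + \sum_(k < d) #|[set u in U | ~~ P k.+1 u]|)%N.
Proof.
set A := [set u in U | _].
have sAU : A \subset U by apply/subsetP => u; rewrite inE => /andP[].
rewrite -(cardsID A U) (setIidPr sAU) leq_add2l.
rewrite (leq_trans _ (card_bigcup_le _)) //.
apply/subset_leq_card/subsetP => u; rewrite !inE => /andP[u_notA uU].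
have [k /[!negb_imply] /andP[k_gt0 not_Pk]] :
    exists k : 'I_d.+1, ~~ ((0 < k)%N ==> P k u).
  by apply/forallPn; apply: contra u_notA => all_P; rewrite uU.
have k_le : (k.-1 < d)%N by rewrite prednK // -ltnS.
by apply/bigcupP; exists (Ordinal k_le); rewrite // inE uU prednK.
Qed.

End UnionBound.

Section BipartiteCounting.
Variables (R : realType) (V : finType) (Gam G : rel V) (U Rp : {set V}).
Variables (c t beta eps delta : R).
Hypotheses (G_sym : forall x y, G x y = G y x) (UR_disjoint : [disjoint U & Rp])
  (G_bip : forall x y, G x y -> ((x \in U) && (y \in Rp)) || ((x \in Rp) && (y \in U))).

Local Notation m := (#|U|%:R : R).
Local Notation r := (#|Rp|%:R : R).
Local Notation e := (bip_edges G U Rp).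
Local Notation q := (qdens R G U Rp).

Definition bad_tuples k u : {set {ffun 'I_k -> V}} :=
  [set S : {ffun 'I_k -> V} | [forall i, S i \in NG G [set u]] &&
                               ~~ rich Gam G U Rp eps [set u] S].

Definition bad_vertices k (S : {ffun 'I_k -> V}) : {set V} :=
  [set u in U | S \in bad_tuples k u].

Lemma good_set1E k u :
  good Gam G U Rp beta eps k [set u] =
  (#|bad_tuples k u|%:R <= beta * (degree G u)%:R ^+ k).
Proof. by rewrite /good -/(bad_tuples k u) NG_set1. Qed.

Lemma sum_card_bad_tuples k :
  (\sum_(u in U) #|bad_tuples k u|
   = \sum_(S : {ffun 'I_k -> V}) #|bad_vertices S|)%N.
Proof.
under eq_bigr do rewrite -sum1_card.
rewrite (exchange_big_dep xpredT) //; apply: eq_bigr => S _.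
by rewrite -sum1_card; apply: congr_big => // u; rewrite [RHS]inE.
Qed.

Lemma bad_vertices_ffun_on k (S : {ffun 'I_k -> V}) u :
  u \in bad_vertices S -> S \in ffun_on Rp.
Proof.
rewrite !inE => /andP[uU /andP[/forallP S_nbrs _]]; apply/ffun_onP => i.
move: (S_nbrs i); rewrite NG_set1 inE => /G_bip.
by rewrite uU (disjointFr UR_disjoint uU) /= => /andP[].
Qed.

Lemma bad_vertices_sub k (S : {ffun 'I_k -> V}) :
  bad_vertices S \subset NG G [set S i | i : 'I_k].
Proof.
apply/subsetP => u; rewrite !inE => /andP[_ /andP[/forallP S_nbrs _]].
apply/forall_inP => _ /imsetP[i _ ->].
by move: (S_nbrs i); rewrite NG_set1 inE G_sym.
Qed.

Lemma qdens_ge0 : 0 <= q.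
Proof. by rewrite divr_ge0 ?mulr_ge0. Qed.

Lemma bip_edges_le : (e <= #|U| * #|Rp|)%N.
Proof.
rewrite -cardsX; apply: subset_leq_card; apply/subsetP => -[x y].
by rewrite !inE -andbA => /and3P[-> ->].
Qed.

Lemma qdens_le1 : q <= 1.
Proof.
have [mr0 | mr_gt0] := posnP (#|U| * #|Rp|).
  by rewrite /qdens -natrM mr0 invr0 mulr0.
by rewrite ler_pdivrMr ?mul1r -?natrM ?ltr0n // ler_nat bip_edges_le.
Qed.

Lemma bip_edges_gt0_cards : (0 < e)%N -> (0 < #|U|)%N && (0 < #|Rp|)%N.
Proof. by move=> e_gt0; rewrite -muln_gt0 (leq_trans e_gt0) ?bip_edges_le. Qed.

Lemma t_le_of_bip_edges_ge a d : (0 < d)%N -> 0 < a -> (0 < e)%N -> 0 <= t ->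
  powR a^-1 d%:R^-1 * r * powR m (1 - d%:R^-1) * powR t d%:R^-1 <= e%:R ->
  t <= a * m * q ^+ d.
Proof.
move=> d_gt0 a_gt0 /bip_edges_gt0_cards /andP[m_gt0 r_gt0] t_ge0 edges_ge.
have [m_pos r_pos] : 0 < m /\ 0 < r by rewrite !ltr0n.
have e_eq : e%:R = q * m * r.
  by rewrite /qdens -mulrA divfK // mulf_neq0 // pnatr_eq0 -lt0n.
have root_le : powR a^-1 d%:R^-1 * powR m (1 - d%:R^-1) * powR t d%:R^-1 <= q * m.
  rewrite -(ler_pM2r r_pos) -e_eq; apply: le_trans edges_ge.
  by rewrite mulrAC (mulrAC (powR _ _)).
have := expn_le_of_powR_le d_gt0 (powR_ge0 _ _) t_ge0 m_pos root_le.
rewrite powR_invn_expn ?invr_ge0 ?(ltW a_gt0) // => le_t.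
rewrite -(ler_pM2l (_ : 0 < a^-1)) ?invr_gt0 // (le_trans le_t) //.
by rewrite !mulrA mulVf ?gt_eqF // mul1r mulrC.
Qed.

Lemma d_avgE : (0 < #|Rp|)%N -> d_avg R G U Rp = q * r.
Proof.
by move=> r_gt0; rewrite /qdens /d_avg invfM mulrA mulfVK // pnatr_eq0 -lt0n.
Qed.

Lemma bad_tuples_degree0 k u :
  (0 < k)%N -> degree G u = 0%N -> bad_tuples k u = set0.
Proof.
move=> k_gt0 /cards0_eq nbrs0; apply/setP => S; rewrite !inE NG_set1 nbrs0.
apply/negbTE; rewrite negb_and; apply/orP; left.
by apply/forallPn; exists (Ordinal k_gt0); rewrite inE.
Qed.

Hypotheses (Gam_sparse : sparse Gam c t) (c_gt0 : 0 < c) (eps_ge0 : 0 <= eps).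
Hypotheses (beta_ge0 : 0 <= beta) (delta_gt0 : 0 < delta).
Hypothesis G_reduced : reduced delta G U Rp.

Lemma card_bad_vertices_le k (S : {ffun 'I_k -> V}) :
  #|bad_vertices S|%:R <= Num.max t (eps * m * q ^+ k / c).
Proof.
apply: (sparse_card_almost_complete Gam_sparse c_gt0 _ (bad_vertices_sub S)).
  by rewrite !mulr_ge0 ?exprn_ge0 ?qdens_ge0.
by move=> u; rewrite !inE => /andP[_ /andP[_]]; rewrite /rich -ltNge => /ltW.
Qed.

Lemma sum_card_bad_tuples_le k : t <= eps * m * q ^+ k / c ->
  (\sum_(u in U) #|bad_tuples k u|)%:R <= r ^+ k * (eps * m * q ^+ k / c).
Proof.
move=> t_le; rewrite sum_card_bad_tuples natr_sum.
set th := eps * m * q ^+ k / c in t_le *.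
apply: (@le_trans _ _ (\sum_(S : {ffun 'I_k -> V} | S \in ffun_on Rp) th));
  last by rewrite sumr_const card_ffun_on card_ord -natrX mulr_natl.
rewrite [leRHS]big_mkcond /=; apply: ler_sum => S _; case: ifP => [_ | S_off].
  by rewrite (le_trans (card_bad_vertices_le S)) // ge_max t_le lexx.
suff -> : bad_vertices S = set0 by rewrite cards0.
apply/setP => u; rewrite in_set0; apply/negbTE/negP.
by move=> /bad_vertices_ffun_on; rewrite S_off.
Qed.

Lemma card_bad_tuples_gt k u : u \in U -> (0 < #|Rp|)%N ->
  ~~ good Gam G U Rp beta eps k [set u] ->
  beta * (delta * q * r) ^+ k < #|bad_tuples k u|%:R.
Proof.
move=> uU r_gt0; rewrite good_set1E -ltNge; apply: le_lt_trans.
rewrite ler_wpM2l // lerXn2r ?nnegrE ?ler0n //; last first.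
  by rewrite -mulrA -d_avgE //; case/andP: (G_reduced uU).
by rewrite mulr_ge0 ?ler0n // mulr_ge0 ?qdens_ge0 // ltW.
Qed.

Lemma card_not_good_le k : (0 < k)%N ->
  ((0 < e)%N -> t <= eps * m * q ^+ k / c) ->
  #|[set u in U | ~~ good Gam G U Rp beta eps k [set u]]|%:R * (beta * delta ^+ k)
    <= eps * m / c.
Proof.
move=> k_gt0 t_le; set B := [set u in U | _].
have bound_ge0 : 0 <= eps * m / c by rewrite divr_ge0 ?mulr_ge0 // ltW.
have [e0 | e_gt0] := posnP e.
  suff -> : B = set0 by rewrite cards0 mul0r.
  apply/eqP; rewrite -subset0; apply/subsetP => u; rewrite inE => /andP[uU].
  have deg0 : degree G u = 0%N.
    apply/eqP; rewrite -(@lern0 R).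
    by case/andP: (G_reduced uU) => _; rewrite /d_avg e0 mul0r mulr0.
  rewrite good_set1E bad_tuples_degree0 // deg0 cards0.
  by rewrite expr0n gtn_eqF // mulr0 lexx.
have /andP[m_gt0 r_gt0] := bip_edges_gt0_cards e_gt0.
have qr_gt0 : 0 < (q * r) ^+ k.
  by rewrite exprn_gt0 // mulr_gt0 ?divr_gt0 ?mulr_gt0 ?ltr0n.
have sBU : B \subset U by apply/subsetP => u; rewrite inE => /andP[].
have lower : #|B|%:R * (beta * (delta * q * r) ^+ k)
    <= (\sum_(u in U) #|bad_tuples k u|)%:R.
  rewrite natr_sum (big_setID B) /= (setIidPr sBU).
  rewrite -[leLHS]addr0 lerD ?sumr_ge0 //.
  rewrite mulr_natl -sumr_const; apply: ler_sum => u.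
  rewrite inE => /andP[uU not_good].
  exact/ltW/card_bad_tuples_gt.
have upper := sum_card_bad_tuples_le (t_le e_gt0).
rewrite -(ler_pM2r qr_gt0); move: (le_trans lower upper); rewrite !exprMn.
lra.
Qed.

Lemma card_not_good_le_edges a d k : (0 < k)%N -> (k <= d)%N ->
  0 < a -> 0 < t -> delta <= 1 -> eps = c * a ->
  powR a^-1 d%:R^-1 * r * powR m (1 - d%:R^-1) * powR t d%:R^-1 <= e%:R ->
  #|[set u in U | ~~ good Gam G U Rp beta eps k [set u]]|%:R * (beta * delta ^+ d)
    <= a * m.
Proof.
move=> k_gt0 k_le_d a_gt0 t_gt0 delta_le1 eps_eq edges_ge.
have eps_m_c : eps * m / c = a * m.
  by rewrite eps_eq mulrAC (mulrAC c) mulfV ?mul1r ?gt_eqF.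
have q_pow : q ^+ d <= q ^+ k.
  by apply: (ler_wiXn2l _ _ k_le_d); rewrite ?qdens_ge0 ?qdens_le1.
rewrite -eps_m_c (le_trans _ (card_not_good_le k_gt0 _)) //.
  rewrite ler_wpM2l // ler_wpM2l //.
  exact: ler_wiXn2l (ltW delta_gt0) delta_le1 _ _ k_le_d.
move=> e_gt0; rewrite mulrAC eps_m_c.
have d_gt0 := leq_trans k_gt0 k_le_d.
rewrite (le_trans (t_le_of_bip_edges_ge d_gt0 a_gt0 e_gt0 (ltW t_gt0) edges_ge)) //.
by rewrite ler_wpM2l // mulr_ge0 // ltW.
Qed.

End BipartiteCounting.

Theorem lemma3p4 (R : realType) (VH : finType) (H : rel VH) (delta : R) :
  simple_graph H ->
  let kappa : R := 1 + (#|VH|%:R)^-1 in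
  0 < delta -> delta < 4^-1 ->
  powR delta (1 - kappa^-1) < 1 - 2 * delta ->
  forall (c beta : R) (d : nat),
  0 < c -> c < 2^-1 -> 0 < beta -> (0 < d)%N ->
  exists C eps : R, 0 < C /\ 0 < eps /\
  forall (V : finType) (Gam G : rel V) (U Rp : {set V}) (t : R),
    0 < t ->
    simple_graph Gam -> sparse Gam c t ->
    bipartite_subgraph Gam G U Rp ->
    reduced delta G U Rp ->
    C * #|Rp|%:R * powR (#|U|%:R) (1 - (d%:R)^-1) * powR t (d%:R)^-1
      <= (bip_edges G U Rp)%:R ->
    (#|U|%:R <= 2 * #|[set u in U | [forall k : 'I_d.+1,
        (0 < (k : nat))%N ==> good Gam G U Rp beta eps k [set u]]]|%:R :> R).
Proof.
move=> _ _ delta_gt0 delta_lt4 _ c beta d c_gt0 _ beta_gt0 d_gt0.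
pose a := beta * delta ^+ d / (2 * d%:R).
have bd_gt0 : 0 < beta * delta ^+ d by rewrite mulr_gt0 ?exprn_gt0.
have a_gt0 : 0 < a by rewrite divr_gt0 // mulr_gt0 // ltr0n.
have delta_le1 : delta <= 1 by rewrite ltW // (lt_trans delta_lt4) // invf_lt1 // ltr1n.
exists (powR a^-1 d%:R^-1), (c * a).
split; first by rewrite powR_gt0 ?invr_gt0.
split; first by rewrite mulr_gt0.
move=> V Gam G U Rp t t_gt0 _ Gam_sparse [[G_sym _] [UR_disj [_ G_bip]]] G_red edges_ge.
set m := (#|U|%:R : R).
have not_good_le (k : 'I_d) :
    #|[set u in U | ~~ good Gam G U Rp beta (c * a) k.+1 [set u]]|%:R
      <= m / (2 * d%:R).
  rewrite -(ler_pM2r bd_gt0) (le_trans (card_not_good_le_edges G_sym UR_disj G_bip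
    Gam_sparse c_gt0 (ltW (mulr_gt0 c_gt0 a_gt0)) (ltW beta_gt0) delta_gt0 G_red
    (ltn0Sn k) (ltn_ord k) a_gt0 t_gt0 delta_le1 erefl edges_ge)) //.
  by rewrite -/m /a mulrC mulrA mulrAC.
have sum_le :
    \sum_(k < d) #|[set u in U | ~~ good Gam G U Rp beta (c * a) k.+1 [set u]]|%:R
      <= m / 2.
  rewrite (le_trans (ler_sum _ (fun k _ => not_good_le k))) // sumr_const card_ord.
  by rewrite -[_ *+ d]mulr_natr invfM mulrA mulfVK ?lexx // pnatr_eq0 -lt0n.
have := card_forall_ge U (fun k u => good Gam G U Rp beta (c * a) k [set u]) d.
rewrite -(ler_nat R) natrD natr_sum -/m.
lra.
Qed.
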